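(* Let $U\subset\mathbb R^2$ be open and $f\in C^2(U)$ a solution of \[ 2(x-2f_y)(y+2f_x)(f_{yy}-f_{xx})+(1-2f_{xy})(y+2f_x)^2+(x-2f_y)^2(1+2f_{xy})=0 \quad (\ast) \] on $U$. If $x-2f_y\ne0$ on $U$, then $g=\dfrac{y+2f_x}{x-2f_y}$ satisfies the backward inviscid Burgers equation $g_y=g\,g_x$ on $U$. If $y+2f_x\neq0$ on $U$, then $h=\dfrac{x-2f_y}{y+2f_x}$ satisfies $h_x=h\,h_y$ on $U$.
   Context: Equation $(\ast)$ is the equation characterizing graphs $z=f(x,y)$ in the Heisenberg group with vanishing curvature of transversality. *)

From Stdlib Require Import Reals.
Open Scope R_scope.

Definition open2 (U : R -> R -> Prop) : Prop :=
  forall x y, U x y -> exists eps, 0 < eps /\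
    forall x' y', Rabs (x' - x) < eps -> Rabs (y' - y) < eps -> U x' y'.

Definition cont2_at (F : R -> R -> R) (x y : R) : Prop :=
  forall eps, 0 < eps -> exists delta, 0 < delta /\
    forall x' y', Rabs (x' - x) < delta -> Rabs (y' - y) < delta ->
      Rabs (F x' y' - F x y) < eps.

Definition is_dx (F D : R -> R -> R) (x y : R) : Prop :=
  derivable_pt_lim (fun t => F t y) x (D x y).
Definition is_dy (F D : R -> R -> R) (x y : R) : Prop :=
  derivable_pt_lim (fun t => F x t) y (D x y).

Definition C2_on (U : R -> R -> Prop) (f fx fy fxx fxy fyx fyy : R -> R -> R) : Prop :=
  forall x y, U x y ->
    is_dx f fx x y /\ is_dy f fy x y /\
    is_dx fx fxx x y /\ is_dy fx fxy x y /\
    is_dx fy fyx x y /\ is_dy fy fyy x y /\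
    cont2_at f x y /\ cont2_at fx x y /\ cont2_at fy x y /\
    cont2_at fxx x y /\ cont2_at fxy x y /\ cont2_at fyx x y /\ cont2_at fyy x y.

From Stdlib Require Import Reals Lra.
From Coquelicot Require Import Coquelicot.
Open Scope R_scope.

(* Write A := x - 2 f_y and B := y + 2 f_x, so that g = B / A and h = A / B.
   The proof has two independent ingredients.

   If a, b are differentiable along one line
      through a point and along another, the two directional derivatives q1,
      q2 of b/a satisfy  q2 - (b/a) q1 = (a^2 b2' - a b (a2' + b1') + b^2 a1')/a^3.
      With (a, b) = (A, B) and directions (x, y) the numerator is exactly the
      left-hand side of the transversality equation, giving g_y = g g_x; with
      (a, b) = (B, A) and directions (y, x) it is that same left-hand side
      again, giving h_x = h h_y.  Both identifications use f_yx = f_xy.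

   For f in C^2 on an open set the given
      second partials satisfy f_yx = f_xy; this is Coquelicot's Schwarz
      theorem, once the data of [C2_on] (partials given as functions) are
      identified with the iterated [Derive] expressions it speaks about. *)

Lemma open2_locally_x (U : R -> R -> Prop) (u v : R) :
  open2 U -> U u v -> locally u (fun z => U z v).
Proof.
  intros HO Huv; destruct (HO u v Huv) as [e [He HU]].
  exists (mkposreal e He); intros z Hz; apply HU; [exact Hz |].
  rewrite Rminus_eq_0, Rabs_R0; exact He.
Qed.

Lemma open2_locally_y (U : R -> R -> Prop) (u v : R) :
  open2 U -> U u v -> locally v (fun z => U u z).
Proof.
  intros HO Huv; destruct (HO u v Huv) as [e [He HU]].
  exists (mkposreal e He); intros z Hz; apply HU; [| exact Hz].
  rewrite Rminus_eq_0, Rabs_R0; exact He.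
Qed.

Lemma open2_locally_2d (U : R -> R -> Prop) (u v : R) :
  open2 U -> U u v -> locally_2d U u v.
Proof.
  intros HO Huv; destruct (HO u v Huv) as [e [He HU]].
  now exists (mkposreal e He).
Qed.

Lemma cont2_at_continuity_2d_pt (F : R -> R -> R) (x y : R) :
  cont2_at F x y -> continuity_2d_pt F x y.
Proof.
  intros HF eps; destruct (HF eps (cond_pos eps)) as [d [Hd HFd]].
  now exists (mkposreal d Hd).
Qed.

Lemma derivable_pt_lim_affine (p k c : R) (F : R -> R) (r l : R) :
  derivable_pt_lim F r l ->
  derivable_pt_lim (fun t => p * t + k + c * F t) r (p + c * l).
Proof.
  intros HF.
  pose proof (derivable_pt_lim_plus (fun t => p * t) (fun _ => k) r (p * 1) 0
                (derivable_pt_lim_scal id p r 1 (derivable_pt_lim_id r))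
                (derivable_pt_lim_const k r)) as Hline.
  replace (p + c * l) with (p * 1 + 0 + c * l) by ring.
  exact (derivable_pt_lim_plus _ _ r _ _ Hline (derivable_pt_lim_scal F c r l HF)).
Qed.

Lemma derivable_pt_lim_quotient (a b : R -> R) (s da db : R) :
  derivable_pt_lim a s da -> derivable_pt_lim b s db -> a s <> 0 ->
  derivable_pt_lim (fun r => b r / a r) s ((db * a s - b s * da) / a s ^ 2).
Proof.
  intros Ha Hb Hnz.
  replace ((db * a s - b s * da) / a s ^ 2)
    with ((db * a s - da * b s) / Rsqr (a s)) by (unfold Rsqr; field; exact Hnz).
  exact (derivable_pt_lim_div b a s db da Hb Ha Hnz).
Qed.

Lemma quotient_burgers (a1 b1 a2 b2 : R -> R) (s t da1 db1 da2 db2 : R) :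
  derivable_pt_lim a1 s da1 -> derivable_pt_lim b1 s db1 ->
  derivable_pt_lim a2 t da2 -> derivable_pt_lim b2 t db2 ->
  a2 t = a1 s -> b2 t = b1 s -> a1 s <> 0 ->
  a1 s ^ 2 * db2 - a1 s * b1 s * (da2 + db1) + b1 s ^ 2 * da1 = 0 ->
  exists q1 q2,
    derivable_pt_lim (fun r => b1 r / a1 r) s q1 /\
    derivable_pt_lim (fun r => b2 r / a2 r) t q2 /\
    q2 = b1 s / a1 s * q1.
Proof.
  intros Ha1 Hb1 Ha2 Hb2 Ea Eb Hnz Hburgers.
  exists ((db1 * a1 s - b1 s * da1) / a1 s ^ 2),
         ((db2 * a2 t - b2 t * da2) / a2 t ^ 2).
  split; [| split].
  - now apply derivable_pt_lim_quotient.
  - apply derivable_pt_lim_quotient; [exact Ha2 | exact Hb2 | now rewrite Ea].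
  - rewrite Ea, Eb; apply Rminus_diag_uniq.
    replace (_ - _) with
      ((a1 s ^ 2 * db2 - a1 s * b1 s * (da2 + db1) + b1 s ^ 2 * da1) / a1 s ^ 3)
      by (field; exact Hnz).
    rewrite Hburgers; unfold Rdiv; ring.
Qed.

Section C2Function.

Variables (U : R -> R -> Prop) (f fx fy fxx fxy fyx fyy : R -> R -> R).
Hypothesis U_open : open2 U.
Hypothesis f_C2 : C2_on U f fx fy fxx fxy fyx fyy.

(* On U the iterated derivatives seen by Schwarz's theorem are fyx and fxy. *)
Lemma C2_is_derive_yx (u v : R) :
  U u v -> is_derive (fun z => Derive (fun t => f z t) v) u (fyx u v).
Proof.
  intros Huv; apply (is_derive_ext_loc (fun z => fy z v)).
  - apply (filter_imp (fun z => U z v)); [| exact (open2_locally_x U u v U_open Huv)].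
    intros z Hz; symmetry; apply is_derive_unique, is_derive_Reals, (f_C2 z v Hz).
  - apply is_derive_Reals, (f_C2 u v Huv).
Qed.

Lemma C2_is_derive_xy (u v : R) :
  U u v -> is_derive (fun z => Derive (fun t => f t z) u) v (fxy u v).
Proof.
  intros Huv; apply (is_derive_ext_loc (fun z => fx u z)).
  - apply (filter_imp (fun z => U u z)); [| exact (open2_locally_y U u v U_open Huv)].
    intros z Hz; symmetry; apply is_derive_unique, is_derive_Reals, (f_C2 u z Hz).
  - apply is_derive_Reals, (f_C2 u v Huv).
Qed.

Lemma C2_mixed_partials (x y : R) : U x y -> fyx x y = fxy x y.
Proof.
  intros Hxy.
  rewrite <- (is_derive_unique _ _ _ (C2_is_derive_yx x y Hxy)),
          <- (is_derive_unique _ _ _ (C2_is_derive_xy x y Hxy)).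
  pose proof (open2_locally_2d U x y U_open Hxy) as HUloc.
  destruct (f_C2 x y Hxy) as (_ & _ & _ & _ & _ & _ & _ & _ & _ & _ & Hcxy & Hcyx & _).
  apply Schwarz.
  - apply (locally_2d_impl U); [| exact HUloc].
    apply locally_2d_forall; intros u v Huv.
    destruct (f_C2 u v Huv) as (Hfx & Hfy & _).
    split; [| split; [| split]].
    + exists (fx u v); apply is_derive_Reals, Hfx.
    + exists (fy u v); apply is_derive_Reals, Hfy.
    + exists (fyx u v); apply C2_is_derive_yx, Huv.
    + exists (fxy u v); apply C2_is_derive_xy, Huv.
  - apply (continuity_2d_pt_ext_loc fyx).
    + apply (locally_2d_impl U); [| exact HUloc].
      apply locally_2d_forall; intros u v Huv.
      symmetry; apply is_derive_unique, C2_is_derive_yx, Huv.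
    + apply cont2_at_continuity_2d_pt, Hcyx.
  - apply (continuity_2d_pt_ext_loc fxy).
    + apply (locally_2d_impl U); [| exact HUloc].
      apply locally_2d_forall; intros u v Huv.
      symmetry; apply is_derive_unique, C2_is_derive_xy, Huv.
    + apply cont2_at_continuity_2d_pt, Hcxy.
Qed.

Lemma C2_dA_dx (x y : R) :
  U x y -> derivable_pt_lim (fun t => t - 2 * fy t y) x (1 + -2 * fyx x y).
Proof.
  intros Hxy; apply (derivable_pt_lim_ext (fun t => 1 * t + 0 + -2 * fy t y)).
  - intros t; ring.
  - apply derivable_pt_lim_affine, (f_C2 x y Hxy).
Qed.

Lemma C2_dA_dy (x y : R) :
  U x y -> derivable_pt_lim (fun t => x - 2 * fy x t) y (0 + -2 * fyy x y).
Proof.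
  intros Hxy; apply (derivable_pt_lim_ext (fun t => 0 * t + x + -2 * fy x t)).
  - intros t; ring.
  - apply derivable_pt_lim_affine, (f_C2 x y Hxy).
Qed.

Lemma C2_dB_dx (x y : R) :
  U x y -> derivable_pt_lim (fun t => y + 2 * fx t y) x (0 + 2 * fxx x y).
Proof.
  intros Hxy; apply (derivable_pt_lim_ext (fun t => 0 * t + y + 2 * fx t y)).
  - intros t; ring.
  - apply derivable_pt_lim_affine, (f_C2 x y Hxy).
Qed.

Lemma C2_dB_dy (x y : R) :
  U x y -> derivable_pt_lim (fun t => t + 2 * fx x t) y (1 + 2 * fxy x y).
Proof.
  intros Hxy; apply (derivable_pt_lim_ext (fun t => 1 * t + 0 + 2 * fx x t)).
  - intros t; ring.
  - apply derivable_pt_lim_affine, (f_C2 x y Hxy).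
Qed.

End C2Function.

Arguments C2_mixed_partials {U f fx fy fxx fxy fyx fyy} _ _ {x y} _.
Arguments C2_dA_dx {U f fx fy fxx fxy fyx fyy} _ {x y} _.
Arguments C2_dA_dy {U f fx fy fxx fxy fyx fyy} _ {x y} _.
Arguments C2_dB_dx {U f fx fy fxx fxy fyx fyy} _ {x y} _.
Arguments C2_dB_dy {U f fx fy fxx fxy fyx fyy} _ {x y} _.

Theorem mainTheorem9 (U : R -> R -> Prop) (f fx fy fxx fxy fyx fyy : R -> R -> R) :
  open2 U ->
  C2_on U f fx fy fxx fxy fyx fyy ->
  (forall x y, U x y ->
     2 * (x - 2 * fy x y) * (y + 2 * fx x y) * (fyy x y - fxx x y)
     + (1 - 2 * fxy x y) * (y + 2 * fx x y) ^ 2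
     + (x - 2 * fy x y) ^ 2 * (1 + 2 * fxy x y) = 0) ->
  ((forall x y, U x y -> x - 2 * fy x y <> 0) ->
     let g := fun x y => (y + 2 * fx x y) / (x - 2 * fy x y) in
     forall x y, U x y -> exists gx gy,
       derivable_pt_lim (fun t => g t y) x gx /\
       derivable_pt_lim (fun t => g x t) y gy /\
       gy = g x y * gx)
  /\
  ((forall x y, U x y -> y + 2 * fx x y <> 0) ->
     let h := fun x y => (x - 2 * fy x y) / (y + 2 * fx x y) in
     forall x y, U x y -> exists hx hy,
       derivable_pt_lim (fun t => h t y) x hx /\
       derivable_pt_lim (fun t => h x t) y hy /\
       hx = h x y * hy).
Proof.
  intros HO HC Heq; split.
  -
    intros Hnz g x y Hxy.
    pose proof (C2_mixed_partials HO HC Hxy) as Hsym.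
    destruct (quotient_burgers (fun t => t - 2 * fy t y) (fun t => y + 2 * fx t y)
                (fun t => x - 2 * fy x t) (fun t => t + 2 * fx x t) x y
                _ _ _ _ (C2_dA_dx HC Hxy) (C2_dB_dx HC Hxy)
                (C2_dA_dy HC Hxy) (C2_dB_dy HC Hxy)
                eq_refl eq_refl (Hnz x y Hxy))
      as (gx & gy & Hgx & Hgy & Hburgers).
    + pose proof (Heq x y Hxy); rewrite Hsym; lra.
    + exists gx, gy; auto.
  -
    intros Hnz h x y Hxy.
    pose proof (C2_mixed_partials HO HC Hxy) as Hsym.
    destruct (quotient_burgers (fun t => t + 2 * fx x t) (fun t => x - 2 * fy x t)
                (fun t => y + 2 * fx t y) (fun t => t - 2 * fy t y) y x
                _ _ _ _ (C2_dB_dy HC Hxy) (C2_dA_dy HC Hxy)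
                (C2_dB_dx HC Hxy) (C2_dA_dx HC Hxy)
                eq_refl eq_refl (Hnz x y Hxy))
      as (hy & hx & Hhy & Hhx & Hburgers).
    + pose proof (Heq x y Hxy); rewrite Hsym; lra.
    + exists hx, hy; auto.
Qed.
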